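(* Let $\beta\in(0,1]$ and consider $N_r\to\infty$ with $N_t=\beta N_r$ (integer), with $\mathbf H$ an $N_r\times N_t$ matrix with i.i.d. $\mathcal{CN}(0,1)$ entries. Then the high-SNR power offset of the MMSE achievable sum rate, $\mathcal L_\infty^{\rm mmse}=\log_2N_t-\log_2e\big(\sum_{\ell=1}^{N_r-N_t}\frac1\ell-\gamma\big)$, converges to $\log_2\big(\frac{\beta}{1-\beta}\big)$ (interpreted as $+\infty$ when $\beta=1$).
   Context: $\gamma$ is the Euler–Mascheroni constant. The high-SNR power offset is $\mathcal L_\infty^{\rm mmse}=\lim_{\mathrm{snr}\to\infty}(\log_2\mathrm{snr}-I^{\rm mmse}/N_t)$, where $I^{\rm mmse}(\mathrm{snr})=\sum_{i=1}^{N_t}E[\log_2(1+\gamma_i)]$ with $\gamma_i=1/\big[(\mathbf I_{N_t}+\frac{\mathrm{snr}}{N_t}\mathbf H^\dagger\mathbf H)^{-1}\big]_{i,i}-1$. *)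

From Stdlib Require Import Reals.
From Coquelicot Require Import Coquelicot.
Open Scope R_scope.

Definition log2 (x : R) : R := ln x / ln 2.

Fixpoint harmonic (n : nat) : R :=
  match n with
  | O => 0
  | S m => harmonic m + / INR (S m)
  end.

Definition euler_gamma : R :=
  real (Lim_seq (fun n => harmonic n - ln (INR n))).

Definition L_mmse_inf (Nr Nt : nat) : R :=
  log2 (INR Nt) - log2 (exp 1) * (harmonic (Nr - Nt) - euler_gamma).

(* The closed form splits as
     L = log2 Nt - log2 (Nr - Nt) - log2 e * ((H_M - ln M) - gamma),  M = Nr - Nt,
   an identity valid for all Nr, Nt.  When Nt = beta Nr with beta < 1, the
   first two terms equal log2 (beta / (1 - beta)) and, since M -> oo, the
   last tends to 0 by the definition of gamma.  When beta = 1, M = 0 and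
   L = log2 Nr + log2 e * gamma -> +oo.  The only analytic input is that
   H_n - ln n converges, which follows from 1/(n+1) <= ln (n+1) - ln n <= 1/n. *)

From Stdlib Require Import Reals Lra Lia.
From Coquelicot Require Import Coquelicot.
Open Scope R_scope.

Lemma ln_le_sub_1 (y : R) : 0 < y -> ln y <= y - 1.
Proof.
  intros Hy. rewrite <- (ln_exp (y - 1)). apply ln_le; [exact Hy |].
  generalize (exp_ineq1_le (y - 1)); lra.
Qed.

Lemma ln_succ_sub_le_inv (x : R) : 0 < x -> ln (x + 1) - ln x <= / x.
Proof.
  intros Hx. rewrite <- ln_div by lra.
  replace (/ x) with ((x + 1) / x - 1) by (field; lra).
  apply ln_le_sub_1, Rdiv_lt_0_compat; lra.
Qed.

Lemma inv_succ_le_ln_succ_sub (x : R) : 0 < x -> / (x + 1) <= ln (x + 1) - ln x.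
Proof.
  intros Hx.
  assert (H := ln_le_sub_1 (x / (x + 1)) ltac:(apply Rdiv_lt_0_compat; lra)).
  rewrite ln_div in H by lra.
  replace (x / (x + 1) - 1) with (- / (x + 1)) in H by (field; lra).
  lra.
Qed.

Lemma ln_succ_le_harmonic (n : nat) : ln (INR (S n)) <= harmonic n.
Proof.
  induction n as [| n IH].
  - simpl. rewrite ln_1. lra.
  - change (harmonic (S n)) with (harmonic n + / INR (S n)).
    assert (Hn : 0 < INR (S n)) by apply lt_0_INR, Nat.lt_0_succ.
    rewrite S_INR. generalize (ln_succ_sub_le_inv _ Hn). lra.
Qed.

Lemma is_lim_seq_harmonic_sub_ln :
  is_lim_seq (fun n => harmonic n - ln (INR n)) euler_gamma.
Proof.
  (* From index 1 on, H_n - ln n is nonincreasing and nonnegative. *)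
  set (b := fun n => harmonic (S n) - ln (INR (S n))).
  assert (Hb : ex_finite_lim_seq b).
  { apply ex_finite_lim_seq_decr with 0; intro n; unfold b;
      assert (Hn : 0 < INR (S n)) by apply lt_0_INR, Nat.lt_0_succ;
      generalize (inv_succ_le_ln_succ_sub _ Hn); rewrite <- S_INR.
    - change (harmonic (S (S n))) with (harmonic (S n) + / INR (S (S n))).
      lra.
    - generalize (ln_succ_le_harmonic (S n)), (S_INR (S n)).
      assert (0 < / INR (S (S n))) by (apply Rinv_0_lt_compat, lt_0_INR; lia).
      lra. }
  destruct Hb as [l Hl].
  assert (Ha : is_lim_seq (fun n => harmonic n - ln (INR n)) l)
    by (apply is_lim_seq_incr_1; exact Hl).
  unfold euler_gamma. rewrite (is_lim_seq_unique _ _ Ha). exact Ha.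
Qed.

Lemma is_lim_seq_comp_nat (u : nat -> R) (l : Rbar) (v : nat -> nat) :
  is_lim_seq (fun k => INR (v k)) p_infty ->
  is_lim_seq u l -> is_lim_seq (fun k => u (v k)) l.
Proof.
  intros Hv. apply is_lim_seq_subseq.
  intros P [N HN].
  destruct (Hv (fun x => INR N <= x)) as [K HK].
  { exists (INR N). intros; lra. }
  exists K. intros k Hk. apply HN, INR_le, HK, Hk.
Qed.

Lemma log2_exp_1 : log2 (exp 1) = / ln 2.
Proof. unfold log2. rewrite ln_exp. field. apply ln_neq_0; lra. Qed.

Lemma L_mmse_inf_split (Nr Nt : nat) :
  L_mmse_inf Nr Nt =
  log2 (INR Nt) - log2 (INR (Nr - Nt))
  - log2 (exp 1) * ((harmonic (Nr - Nt) - ln (INR (Nr - Nt))) - euler_gamma).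
Proof.
  unfold L_mmse_inf. rewrite log2_exp_1. unfold log2.
  field. apply ln_neq_0; lra.
Qed.

Lemma log2_mult_sub (a b x : R) :
  0 < a -> 0 < b -> 0 < x -> log2 (a * x) - log2 (b * x) = log2 (a / b).
Proof.
  intros Ha Hb Hx. unfold log2.
  rewrite ln_div, !ln_mult by lra. field. apply ln_neq_0; lra.
Qed.

Lemma is_lim_seq_scal_pos_p_infty (u : nat -> R) (c : R) :
  0 < c -> is_lim_seq u p_infty -> is_lim_seq (fun k => u k * c) p_infty.
Proof.
  intros Hc Hu. eapply is_lim_seq_mult; [exact Hu | apply is_lim_seq_const |].
  apply is_Rbar_mult_p_infty_pos. exact Hc.
Qed.

Lemma is_lim_seq_L_mmse_inf_full_load (Nr : nat -> nat) :
  is_lim_seq (fun k => INR (Nr k)) p_infty ->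
  is_lim_seq (fun k => L_mmse_inf (Nr k) (Nr k)) p_infty.
Proof.
  intros HNr.
  apply is_lim_seq_ext with
    (fun k => ln (INR (Nr k)) * / ln 2 + log2 (exp 1) * euler_gamma).
  { intro k. unfold L_mmse_inf. rewrite Nat.sub_diag. simpl.
    unfold log2. field. apply ln_neq_0; lra. }
  eapply is_lim_seq_plus with (l1 := p_infty);
    [| apply is_lim_seq_const | reflexivity].
  apply is_lim_seq_scal_pos_p_infty.
  - apply Rinv_0_lt_compat. rewrite <- ln_1. apply ln_increasing; lra.
  - eapply filterlim_comp; [exact HNr | exact is_lim_ln_p].
Qed.

Lemma is_lim_seq_L_mmse_inf_partial_load (beta : R) (Nr Nt : nat -> nat) :
  0 < beta < 1 ->
  (forall k, INR (Nt k) = beta * INR (Nr k)) ->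
  is_lim_seq (fun k => INR (Nr k)) p_infty ->
  is_lim_seq (fun k => L_mmse_inf (Nr k) (Nt k)) (log2 (beta / (1 - beta))).
Proof.
  intros Hbeta HNt HNr.
  assert (HM : forall k, INR (Nr k - Nt k) = (1 - beta) * INR (Nr k)).
  { intro k. assert (Hle : (Nt k <= Nr k)%nat).
    { apply INR_le. rewrite HNt. generalize (pos_INR (Nr k)). nra. }
    rewrite minus_INR, HNt by exact Hle. ring. }
  assert (HMlim : is_lim_seq (fun k => INR (Nr k - Nt k)) p_infty).
  { apply is_lim_seq_ext with (fun k => INR (Nr k) * (1 - beta)).
    - intro k. rewrite HM. ring.
    - apply is_lim_seq_scal_pos_p_infty; [lra | exact HNr]. }
  apply is_lim_seq_ext_loc with
    (fun k => log2 (beta / (1 - beta))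
      - log2 (exp 1) * ((harmonic (Nr k - Nt k) - ln (INR (Nr k - Nt k)))
                        - euler_gamma)).
  { destruct (HNr (fun x => 0 < x)) as [K HK]; [exists 0; intros; lra |].
    exists K. intros k Hk. rewrite L_mmse_inf_split, HM, HNt.
    rewrite log2_mult_sub by (apply HK in Hk; lra). reflexivity. }
  replace (Finite (log2 (beta / (1 - beta)))) with
    (Finite (log2 (beta / (1 - beta)) - log2 (exp 1) * (euler_gamma - euler_gamma)))
    by (f_equal; ring).
  apply is_lim_seq_minus'; [apply is_lim_seq_const |].
  apply (is_lim_seq_scal_l _ _ (euler_gamma - euler_gamma)).
  apply is_lim_seq_minus'; [| apply is_lim_seq_const].
  exact (is_lim_seq_comp_nat _ _ _ HMlim is_lim_seq_harmonic_sub_ln).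
Qed.

Theorem corollary4 (beta : R) (hbeta : 0 < beta <= 1)
  (Nr Nt : nat -> nat)
  (hNt : forall k, INR (Nt k) = beta * INR (Nr k))
  (hNr : is_lim_seq (fun k => INR (Nr k)) p_infty) :
  is_lim_seq (fun k => L_mmse_inf (Nr k) (Nt k))
    (if Req_EM_T beta 1 then p_infty else Finite (log2 (beta / (1 - beta)))).
Proof.
  destruct (Req_EM_T beta 1) as [Hbeta1 | Hbeta1].
  - apply is_lim_seq_ext with (fun k => L_mmse_inf (Nr k) (Nr k)).
    + intro k. f_equal. apply INR_eq. rewrite hNt, Hbeta1. ring.
    + exact (is_lim_seq_L_mmse_inf_full_load Nr hNr).
  - apply is_lim_seq_L_mmse_inf_partial_load; [| exact hNt | exact hNr].
    destruct hbeta as [Hpos [Hlt | Heq]]; [lra | contradiction].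
Qed.
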